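(* Let $\mathcal{D}$ be a geographic domain (a measurable subset of $\mathbb{R}^d$, e.g. $d=2$) with finite area $|\mathcal{D}|=\int_{\mathcal{D}}1\,dz>0$, and let $x:\mathcal{D}\to\mathbb{R}^p$ be a feature map. Suppose we observe $n_1$ presence points $z_1,\dots,z_{n_1}\in\mathcal{D}$ (indexed by $y_i=1$) and $n_0$ background points $z_{n_1+1},\dots,z_{n_1+n_0}\in\mathcal{D}$ (indexed by $y_i=0$), with $x_i=x(z_i)$. Let $\{f_\theta:\theta\in\mathbb{R}^d\}$ be a parametric family of real-valued functions and $J(\theta)$ a penalty function. Define $$g_1(\alpha,\theta)=\Big(\sum_{i:y_i=1}\alpha+f_\theta(x_i)\Big)-\int_{\mathcal{D}}e^{\alpha+f_\theta(x(z))}\,dz-J(\theta)-\log n_1!,$$ the penalized log-likelihood of an inhomogeneous Poisson process with intensity $e^{\alpha+f_\theta(x(z))}$, and $$g_2(\theta)=\sum_{i:y_i=1}f_\theta(x_i)-n_1\log\Big(\int_{\mathcal{D}}e^{f_\theta(x(z))}\,dz\Big)-J(\theta),$$ the penalized log-likelihood of an i.i.d. sample with density proportional to $e^{f_\theta(x(z))}$ (assuming the integrals are finite). Then $\theta$ maximizes $g_2$ if and only if $(\alpha,\theta)$ maximizes $g_1$ for some $\alpha\in\mathbb{R}$. The same conclusion holds if the integrals $\int_{\mathcal{D}}e^{\alpha+f_\theta(x(z))}dz$ and $\int_{\mathcal{D}}e^{f_\theta(x(z))}dz$ are replaced by the background-sample sums $\frac{|\mathcal{D}|}{n_0}\sum_{i:y_i=0}e^{\alpha+f_\theta(x_i)}$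 and $\frac{|\mathcal{D}|}{n_0}\sum_{i:y_i=0}e^{f_\theta(x_i)}$ respectively.
   Context: Here $g_1$ is the (penalized) inhomogeneous Poisson process (IPP) log-likelihood and $g_2$ is the (penalized) Maxent log-likelihood; the intercept $\alpha$ is not penalized. *)

From HB Require Import structures.
From mathcomp Require Import all_boot all_order all_algebra.
From mathcomp Require Import all_classical all_reals all_analysis.
Set Implicit Arguments. Unset Strict Implicit. Unset Printing Implicit Defensive.
Import Order.TTheory GRing.Theory Num.Theory.
Local Open Scope ring_scope.

Section Likelihoods.
Context {R : realType} {dsp : measure_display} {T : measurableType dsp}.
Context {p q : nat}.
(* mu : the measure dz on the domain space; D : the geographic domain;
   x : feature map; f : parametric family f_theta; J : penalty;
   z1 : the n1 presence points; z0 : the n0 background points. *)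
Variables (mu : {measure set T -> \bar R}) (D : set T)
  (x : T -> 'rV[R]_p) (f : 'rV[R]_q -> 'rV[R]_p -> R) (J : 'rV[R]_q -> R).
Variables (n1 n0 : nat) (z1 : 'I_n1 -> T) (z0 : 'I_n0 -> T).

Definition area : R := fine (mu D).

Definition g1 (a : R) (th : 'rV[R]_q) : R :=
  (\sum_(i < n1) (a + f th (x (z1 i))))
  - Rintegral mu D (fun z => expR (a + f th (x z)))
  - J th - ln (n1`!%:R).

Definition g2 (th : 'rV[R]_q) : R :=
  (\sum_(i < n1) f th (x (z1 i)))
  - n1%:R * ln (Rintegral mu D (fun z => expR (f th (x z))))
  - J th.

Definition g1_bg (a : R) (th : 'rV[R]_q) : R :=
  (\sum_(i < n1) (a + f th (x (z1 i))))
  - area / n0%:R * (\sum_(i < n0) expR (a + f th (x (z0 i))))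
  - J th - ln (n1`!%:R).

Definition g2_bg (th : 'rV[R]_q) : R :=
  (\sum_(i < n1) f th (x (z1 i)))
  - n1%:R * ln (area / n0%:R * (\sum_(i < n0) expR (f th (x (z0 i)))))
  - J th.

End Likelihoods.

Definition maximizes1 {A : Type} {R : realType} (g : A -> R) (t : A) : Prop :=
  forall t', (g t' <= g t)%R.

Definition maximizes2 {A B : Type} {R : realType} (g : A -> B -> R)
  (a : A) (t : B) : Prop :=
  forall a' t', (g a' t' <= g a t)%R.

From HB Require Import structures.
From mathcomp Require Import all_boot all_order all_algebra.
From mathcomp Require Import all_classical all_reals all_analysis.
From mathcomp Require Import lra.
Set Implicit Arguments. Unset Strict Implicit. Unset Printing Implicit Defensive.
Import Order.TTheory GRing.Theory Num.Theory.
Local Open Scope ring_scope.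

(* Both log-likelihoods share the terms depending on theta only; what differs
   is [n1 a - e^a I(theta)] in g1 against [- n1 ln I(theta)] in g2, where
   I(theta) is the (integral or background-sum) normalising constant.  For
   fixed theta, the concave function [a |-> n1 a - e^a I] is maximised at
   [a = ln (n1 / I)] with value [n1 ln n1 - n1 ln I - n1], so profiling the
   intercept out of g1 gives g2 up to an additive constant. *)

Section InterceptProfile.
Variables (R : realType) (n K : R).
Hypotheses (n_gt0 : 0 < n) (K_gt0 : 0 < K).

Lemma intercept_profile_le a : n * a - expR a * K <= n * ln (n / K) - n.
Proof.
have nK_gt0 : 0 < n / K by rewrite divr_gt0.
have := expR_ge1Dx (a - ln (n / K)).
rewrite expRD expRN lnK ?posrE // invf_div -(ler_pM2l n_gt0) mulrCA.
by rewrite (mulrC n (K / n)) divfK ?gt_eqF //; lra.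
Qed.

Lemma intercept_profile_max :
  n * ln (n / K) - expR (ln (n / K)) * K = n * ln (n / K) - n.
Proof. by rewrite lnK ?posrE ?divr_gt0 // divfK ?gt_eqF. Qed.

End InterceptProfile.

Lemma maximizes_profile (R : realType) (B : Type) (G1 : R -> B -> R)
    (G2 : B -> R) (c : R) :
  (forall a t, G1 a t <= G2 t + c) -> (forall t, exists a, G1 a t = G2 t + c) ->
  forall t, maximizes1 G2 t <-> exists a, maximizes2 G1 a t.
Proof.
move=> G1_le G1_attained t; split.
  move=> G2_max; have [a G1at] := G1_attained t; exists a => a' t'.
  by rewrite G1at (le_trans (G1_le a' t')) // lerD2r G2_max.
move=> [a G1_max] t'; have [a' G1a't'] := G1_attained t'.
have := G1_max a' t'; rewrite G1a't'; have := G1_le a t; lra.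
Qed.

Lemma maximizes_intercept_profile (R : realType) (B : Type) (n L : R)
    (I S P : B -> R) (G1 : R -> B -> R) (G2 : B -> R) :
  0 < n -> (forall t, 0 < I t) ->
  (forall a t, G1 a t = n * a - expR a * I t + S t - P t - L) ->
  (forall t, G2 t = S t - n * ln (I t) - P t) ->
  forall t, maximizes1 G2 t <-> exists a, maximizes2 G1 a t.
Proof.
move=> n_gt0 I_gt0 G1E G2E; apply: (maximizes_profile (c := n * ln n - n - L)).
- move=> a t; have := intercept_profile_le n_gt0 (I_gt0 t) a.
  rewrite G1E G2E ln_div ?posrE //; lra.
- move=> t; exists (ln (n / I t)); rewrite G1E G2E.
  have := intercept_profile_max n_gt0 (I_gt0 t); rewrite ln_div ?posrE //; lra.
Qed.

Section PositiveIntegral.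
Context {R : realType} {d : measure_display} {T : measurableType d}.
Variables (mu : {measure set T -> \bar R}) (D : set T).
Hypothesis mD : measurable D.

Lemma Rintegral_expRD (h : T -> R) (a : R) :
  mu.-integrable D (fun z => (expR (h z))%:E) ->
  Rintegral mu D (fun z => expR (a + h z)) =
  expR a * Rintegral mu D (fun z => expR (h z)).
Proof.
move=> ih; rewrite -RintegralZl //.
by congr Rintegral; apply: funext => z; rewrite expRD.
Qed.

(* A nonnegative function with zero integral vanishes almost everywhere, which
   is impossible for a positive function on a set of positive measure. *)
Lemma Rintegral_gt0 (g : T -> R) :
  (0 < mu D)%E -> (forall z, 0 < g z) ->
  mu.-integrable D (fun z => (g z)%:E) -> 0 < Rintegral mu D g.
Proof.
move=> muD_gt0 g_gt0 ig.
have int_abs : (\int[mu]_(z in D) `|(g z)%:E|)%E = (Rintegral mu D g)%:E.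
  rewrite /Rintegral fineK; last exact: integrable_fin_num ig.
  by apply: eq_integral => z _; rewrite gee0_abs // lee_fin ltW.
rewrite lt_def Rintegral_ge0 ?andbT; last by move=> z _; exact: ltW.
apply/eqP => int0; rewrite int0 in int_abs.
have [N [mN muN0 DN]] := (ae_eq_integral_abs mu mD (measurable_int mu ig)).1 int_abs.
have D_sub_N : (D `<=` N)%classic.
  by move=> z Dz; apply: DN => /(_ Dz) /eqP; rewrite eqe gt_eqF.
have := le_measure mu (mem_set mD) (mem_set mN) D_sub_N.
by rewrite /= muN0 leNgt muD_gt0.
Qed.

End PositiveIntegral.

Lemma sum_expR_gt0 (R : realType) (n : nat) (h : 'I_n -> R) :
  (0 < n)%N -> 0 < \sum_(i < n) expR (h i).
Proof.
move=> n_gt0; rewrite (bigD1 (Ordinal n_gt0)) //=.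
by rewrite ltr_pwDl ?expR_gt0 // sumr_ge0 // => i _; exact: ltW (expR_gt0 _).
Qed.

Theorem proposition1 (R : realType) (dsp : measure_display) (T : measurableType dsp)
  (p q : nat) (mu : {measure set T -> \bar R}) (D : set T)
  (x : T -> 'rV[R]_p) (f : 'rV[R]_q -> 'rV[R]_p -> R) (J : 'rV[R]_q -> R)
  (n1 n0 : nat) (z1 : 'I_n1 -> T) (z0 : 'I_n0 -> T) :
  measurable D ->
  (0 < mu D)%E -> (mu D < +oo)%E ->
  (0 < n1)%N -> (0 < n0)%N ->
  (forall i, D (z1 i)) -> (forall i, D (z0 i)) ->
  ((forall th, mu.-integrable D (fun z => (expR (f th (x z)))%:E)) ->
   forall th,
     maximizes1 (g2 mu D x f J z1) th <->
     exists a : R, maximizes2 (g1 mu D x f J z1) a th)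
  /\
  (forall th,
     maximizes1 (g2_bg mu D x f J z1 z0) th <->
     exists a : R, maximizes2 (g1_bg mu D x f J z1 z0) a th).
Proof.
move=> mD muD_gt0 muD_fin n1_gt0 n0_gt0 _ _.
have n1R_gt0 : 0 < n1%:R :> R by rewrite ltr0n.
have sum_presence a th : \sum_(i < n1) (a + f th (x (z1 i))) =
    n1%:R * a + \sum_(i < n1) f th (x (z1 i)).
  by rewrite big_split /= sumr_const card_ord mulr_natl.
have profile I G1 G2 := @maximizes_intercept_profile R _ n1%:R (ln n1`!%:R) I
  (fun th => \sum_(i < n1) f th (x (z1 i))) J G1 G2 n1R_gt0.
split=> [ig|].
  apply: (profile (fun t => Rintegral mu D (fun z => expR (f t (x z)))))
    => [t|a t|t] //.
    by apply: Rintegral_gt0 => // z; exact: expR_gt0.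
  by rewrite /g1 sum_presence Rintegral_expRD //; lra.
have area_gt0 : 0 < area mu D by apply: fine_gt0; rewrite muD_gt0 muD_fin.
apply: (profile (fun t => area mu D / n0%:R * \sum_(i < n0) expR (f t (x (z0 i)))))
  => [t|a t|t] //.
  by rewrite !mulr_gt0 ?invr_gt0 ?ltr0n ?sum_expR_gt0.
rewrite /g1_bg sum_presence (eq_bigr (fun i => expR a * expR (f t (x (z0 i))))).
  by rewrite -mulr_sumr mulrCA; lra.
by move=> i _; rewrite expRD.
Qed.
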